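(* Suppose that $G$ is a noncyclotomic nonbipartite graph containing a vertex $v$ such that the induced subgraph on $V(G)\setminus\{v\}$ is cyclotomic. Suppose also that $G$ is a line graph. Then $G$ is a Salem graph.
   Context: Graphs are finite simple graphs; eigenvalues are those of the adjacency matrix. A graph is cyclotomic if all its eigenvalues lie in $[-2,2]$. A line graph is a graph $L(H)$ whose vertices are the edges of some graph $H$, two being adjacent iff the edges share a vertex. A nonbipartite graph is a Salem graph if it has exactly one eigenvalue $\lambda>2$ and no eigenvalues in $(-\infty,-2)$. *)

From HB Require Import structures.
From mathcomp Require Import all_boot all_order all_algebra.
From mathcomp Require Import reals.
Set Implicit Arguments. Unset Strict Implicit. Unset Printing Implicit Defensive.
Import Order.TTheory GRing.Theory Num.Theory.
Local Open Scope ring_scope.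

Definition simple_graph (V : finType) (e : rel V) : Prop :=
  symmetric e /\ irreflexive e.

Definition adjmx (R : realType) (V : finType) (e : rel V) : 'M[R]_#|V| :=
  \matrix_(i, j) (e (enum_val i) (enum_val j))%:R.

Definition is_eigenvalue (R : realType) (V : finType) (e : rel V) (x : R) : bool :=
  root (char_poly (adjmx R e)) x.

Definition eig_mult (R : realType) (V : finType) (e : rel V) (x : R) : nat :=
  mup x (char_poly (adjmx R e)).

Definition cyclotomic (R : realType) (V : finType) (e : rel V) : Prop :=
  forall x : R, is_eigenvalue e x -> -2 <= x <= 2.

Definition bipartite (V : finType) (e : rel V) : Prop :=
  exists c : V -> bool, forall x y, e x y -> c x != c y.

Definition delete_vertex (V : finType) (e : rel V) (v : V) : rel {x : V | x != v} :=
  fun x y => e (val x) (val y).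

(* G is a line graph: there are a simple graph H on 'I_n and a bijection f
   from V onto the edge set of H (edges as 2-element vertex sets) such that
   distinct x, y are adjacent iff the edges f x, f y share a vertex. *)
Definition is_line_graph (V : finType) (e : rel V) : Prop :=
  exists (n : nat) (h : rel 'I_n) (f : V -> {set 'I_n}),
    simple_graph h /\ injective f /\
    (forall x, exists a b, h a b /\ f x = [set a; b]) /\
    (forall a b, h a b -> exists x, f x = [set a; b]) /\
    (forall x y, e x y = (x != y) && (f x :&: f y != set0)).

Definition salem_graph (R : realType) (V : finType) (e : rel V) : Prop :=
  ~ bipartite e /\
  (exists lam : R, 2 < lam /\ is_eigenvalue e lam /\ eig_mult e lam = 1%N /\
     forall mu : R, 2 < mu -> is_eigenvalue e mu -> mu = lam) /\
  (forall mu : R, is_eigenvalue e mu -> -2 <= mu).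
Arguments delete_vertex {V} e v.

(* A line graph G = L(H) satisfies A + 2I = N N^T, with N the incidence
   matrix between the edges and the vertices of H; so A + 2I is positive
   semidefinite and no eigenvalue is below -2.  If G had two eigenvalues above 2,
   counted with multiplicity, a combination of two orthonormal eigenvectors
   vanishing at v would have Rayleigh quotient above 2; restricted to G - v it
   keeps the same quotient, which is impossible since every eigenvalue of G - v
   is at most 2.  As G is not cyclotomic, exactly one eigenvalue exceeds 2. *)

From HB Require Import structures.
From mathcomp Require Import all_boot all_order all_algebra.
From mathcomp Require Import reals.
From mathcomp.real_closed Require Import complex.

Set Implicit Arguments. Unset Strict Implicit. Unset Printing Implicit Defensive.
Import Order.TTheory GRing.Theory Num.Theory.
Local Open Scope ring_scope.
Local Open Scope sesquilinear_scope.

Lemma card_setI_pair (T : finType) (A B : {set T}) :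
  #|A| = 2 -> #|B| = 2 -> A != B -> #|A :&: B| = (A :&: B != set0).
Proof.
move=> A2 B2 AB; apply/eqP; rewrite eqn_leq.
have [->|AB0] := eqVneq (A :&: B) set0; first by rewrite cards0.
rewrite card_gt0 AB0 andbT leqNgt; apply: contra AB => AB_gt1.
have sub_eq (X Y : {set T}) : #|X| = 2 -> (1 < #|X :&: Y|)%N -> X :&: Y = X.
  by move=> X2 XY; apply/eqP; rewrite eqEcard subsetIl X2.
have AI : A :&: B = A by exact: sub_eq.
have BI : B :&: A = B by apply: sub_eq; rewrite // setIC.
by rewrite -AI setIC BI.
Qed.

Lemma char_poly_conj (F : fieldType) n (P M : 'M[F]_n) :
  P \in unitmx -> char_poly (invmx P *m M *m P) = char_poly M.
Proof.
move=> P_unit; rewrite /char_poly /char_poly_mx.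
set Q := map_mx polyC P; set Qi := map_mx polyC (invmx P).
have QiQ : Qi *m Q = 1%:M by rewrite -map_mxM mulVmx // map_mx1.
have -> : 'X%:M - map_mx polyC (invmx P *m M *m P) = Qi *m ('X%:M - map_mx polyC M) *m Q.
  rewrite !map_mxM mulmxBr mulmxBl; congr (_ - _).
  by rewrite scalar_mxC -mulmxA QiQ mulmx1.
by rewrite !det_mulmx mulrAC -det_mulmx QiQ det1 mul1r.
Qed.

Lemma root_prod_XsubC_ord (F : idomainType) n (r : 'I_n -> F) x :
  root (\prod_k ('X - (r k)%:P)) x = [exists k, r k == x].
Proof.
rewrite -(big_map r xpredT (fun a => 'X - a%:P)) root_prod_XsubC.
apply/mapP/existsP => [[k _ ->]|[k /eqP <-]]; first by exists k.
by exists k; rewrite ?mem_index_enum.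
Qed.

Lemma mup_prod_XsubC_ord (F : fieldType) n (r : 'I_n -> F) x :
  mup x (\prod_k ('X - (r k)%:P)) = #|[pred k | r k == x]|.
Proof.
rewrite -(big_map r xpredT (fun a => 'X - a%:P)) mu_prod_XsubC count_map.
by rewrite cardE /enum_mem size_filter.
Qed.

Lemma mulmx_trmx_row (R : comPzRingType) n (y : 'rV[R]_n) :
  (y *m y^T) 0 0 = \sum_k y 0 k ^+ 2.
Proof. by rewrite mxE; apply: eq_bigr => k _; rewrite mxE. Qed.

Lemma eigenvalue_ge_of_gram (R : realFieldType) n m (M : 'M[R]_n)
    (N : 'M[R]_(n, m)) (c mu : R) :
  M + c%:M = N *m N^T -> eigenvalue M mu -> - c <= mu.
Proof.
move=> MN /eigenvalueP [x xM x_neq0].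
have x_gt0 : 0 < (x *m x^T) 0 0.
  rewrite mulmx_trmx_row lt_def sumr_ge0 ?andbT => [|k _]; last exact: sqr_ge0.
  apply: contra x_neq0 => /eqP /psumr_eq0P x0; apply/eqP/rowP => k.
  by apply/eqP; rewrite mxE -sqrf_eq0 x0 // => l _; apply: sqr_ge0.
have : 0 <= ((x *m N) *m (x *m N)^T) 0 0.
  by rewrite mulmx_trmx_row sumr_ge0 // => k _; apply: sqr_ge0.
rewrite trmx_mul mulmxA -(mulmxA x) -MN mulmxDr xM mul_mx_scalar -scalerDl.
by rewrite -scalemxAl mxE pmulr_lge0 // -lerBlDr sub0r.
Qed.

Lemma sum_support2 (M : nmodType) (I : finType) (F : I -> M) (i j : I) :
  i != j -> (forall k, k != i -> k != j -> F k = 0) -> \sum_k F k = F i + F j.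
Proof.
move=> ij F0; rewrite (bigD1 i) //= (bigD1 j) 1?eq_sym //=.
by rewrite big1 ?addr0 // => k /andP[ki kj]; apply: F0.
Qed.

Section Rayleigh.
Variables (C : numClosedFieldType) (n : nat) (P : 'M[C]_n) (d : 'rV[C]_n).
Hypothesis P_unitary : P \is unitarymx.
Let A := P^t* *m diag_mx d *m P.

Lemma dotmx_unitary (w : 'rV[C]_n) :
  dotmx (w *m P) (w *m P) = \sum_k `|w 0 k| ^+ 2.
Proof.
rewrite dotmxE trmx_mul map_mxM mulmxA mulmxtVK // mxE.
by apply: eq_bigr => k _; rewrite !mxE normCK.
Qed.

Lemma rayleigh_unitary (w : 'rV[C]_n) :
  dotmx (w *m P *m A) (w *m P) = \sum_k d 0 k * `|w 0 k| ^+ 2.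
Proof.
rewrite dotmxE /A trmx_mul map_mxM !mulmxA !mulmxtVK // mul_mx_diag mxE.
by apply: eq_bigr => k _; rewrite !mxE normCK mulrAC mulrC.
Qed.

Lemma rayleigh_le (b : C) : (forall k, d 0 k <= b) ->
  forall u, dotmx (u *m A) u <= b * dotmx u u.
Proof.
move=> d_le u; rewrite -(mulmxKtV u P_unitary) // rayleigh_unitary dotmx_unitary.
by rewrite mulr_sumr; apply: ler_sum => k _; rewrite ler_wpM2r ?exprn_ge0.
Qed.

Lemma rayleigh_gt_vanishing (b : C) (c i j : 'I_n) :
  i != j -> b < d 0 i -> b < d 0 j ->
  exists u : 'rV_n, u 0 c = 0 /\ b * dotmx u u < dotmx (u *m A) u.
Proof.
move=> ij bi bj.
have [x [y [xy_neq0 xy_c]]] :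
    exists x y, (x != 0) || (y != 0) /\ x * P i c + y * P j c = 0.
  have [Pic0|Pic0] := eqVneq (P i c) 0.
    by exists 1, 0; rewrite oner_eq0 Pic0 mul0r mulr0 addr0.
  by exists (P j c), (- P i c); rewrite oppr_eq0 Pic0 orbT mulrC mulNr addrN.
pose w : 'rV[C]_n := x *: delta_mx 0 i + y *: delta_mx 0 j.
have wE k : w 0 k = x * (k == i)%:R + y * (k == j)%:R by rewrite !mxE !eqxx.
have wi : w 0 i = x by rewrite wE eqxx (negPf ij) mulr0 mulr1 addr0.
have wj : w 0 j = y by rewrite wE eqxx eq_sym (negPf ij) mulr0 mulr1 add0r.
have w0 k : k != i -> k != j -> w 0 k = 0.
  by move=> ki kj; rewrite wE (negPf ki) (negPf kj) !mulr0 addr0.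
exists (w *m P); split.
  by rewrite mxE (sum_support2 ij) ?wi ?wj // => k ki kj; rewrite w0 ?mul0r.
rewrite rayleigh_unitary dotmx_unitary !(sum_support2 ij) ?wi ?wj ?mulrDr; first last.
- by move=> k ki kj; rewrite w0 ?normr0 ?expr0n.
- by move=> k ki kj; rewrite w0 ?normr0 ?expr0n ?mulr0.
have [x0|x_neq0] := eqVneq x 0.
  rewrite x0 normr0 expr0n !mulr0 !add0r ltr_pM2r // exprn_gt0 // normr_gt0.
  by move: xy_neq0; rewrite x0 eqxx.
apply: ltr_leD; first by rewrite ltr_pM2r // exprn_gt0 // normr_gt0.
by rewrite ler_wpM2r ?exprn_ge0 // ltW.
Qed.
End Rayleigh.

(* The spectral theorem of MathComp is stated for hermitian matrices over a
   numClosedFieldType, hence the detour through R[i]. *)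
Lemma real_symmetric_spectral (R : rcfType) n (M : 'M[R]_n) : M^T = M ->
  exists2 P : 'M[R[i]]_n, P \is unitarymx &
  exists r : 'rV[R]_n,
    map_mx (real_complex R) M = P^t* *m diag_mx (map_mx (real_complex R) r) *m P /\
    char_poly M = \prod_k ('X - (r 0 k)%:P).
Proof.
move=> M_sym; set MC := map_mx (real_complex R) M.
have MC_herm : MC \is hermsymmx.
  apply/is_hermitianmxP; rewrite expr0 scale1r; apply/matrixP => i j.
  by rewrite !mxE -[in LHS]M_sym mxE conj_Creal //; apply/complex_realP; eexists.
set P := spectralmx MC; set d := spectral_diag MC.
have P_unitary : P \is unitarymx by apply: spectral_unitarymx.
have /orthomx_spectralP MC_diag := hermitian_normalmx MC_herm.
have [r dE] : exists r : 'rV[R]_n, d = map_mx (real_complex R) r.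
  exists (map_mx (@complex.Re R) d); apply/rowP => k; rewrite !mxE.
  by have /mxOverP/(_ 0 k)/complex_realP[x ->] := hermitian_spectral_diag_real MC_herm.
exists P => //; exists r; split; first by rewrite -dE -invmx_unitary.
apply: (@map_poly_inj _ _ (real_complex R)).
rewrite map_char_poly -/MC MC_diag char_poly_conj ?unitarymx_unit //.
rewrite char_poly_trig ?diag_mx_is_trig // rmorph_prod.
by apply: eq_bigr => k _; rewrite rmorphB /= map_polyX map_polyC mxE eqxx mulr1n -/d dE mxE.
Qed.

Section AdjacencyForm.
Variables (R : realType) (W : finType) (e : rel W).
Local Notation toC := (real_complex R).

Lemma adjmx_sym : symmetric e -> (adjmx R e)^T = adjmx R e.
Proof. by move=> e_sym; apply/matrixP => i j; rewrite !mxE e_sym. Qed.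

Lemma sum_enum_rank (M : nmodType) (F : 'I_#|W| -> M) :
  \sum_k F k = \sum_x F (enum_rank x).
Proof. by rewrite (reindex (@enum_rank W)) //; apply/onW_bij/enum_rank_bij. Qed.

Lemma dotmx_vertexE (u : 'rV[R[i]]_#|W|) :
  dotmx u u = \sum_x `|u 0 (enum_rank x)| ^+ 2.
Proof.
by rewrite dotmxE mxE sum_enum_rank; apply: eq_bigr => x _; rewrite !mxE normCK.
Qed.

Lemma adjmx_formE (u : 'rV[R[i]]_#|W|) :
  dotmx (u *m map_mx toC (adjmx R e)) u =
  \sum_x \sum_y u 0 (enum_rank x) * (e x y)%:R * (u 0 (enum_rank y))^*.
Proof.
rewrite dotmxE mxE sum_enum_rank exchange_big /=; apply: eq_bigr => y _.
rewrite !mxE mulr_suml sum_enum_rank; apply: eq_bigr => x _.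
by rewrite !mxE !enum_rankK rmorph_nat.
Qed.
End AdjacencyForm.

Section DeleteVertex.
Variables (R : realType) (V : finType) (e : rel V) (v : V).
Local Notation V' := ({x : V | x != v} : finType).
Local Notation toC := (real_complex R).

Lemma sum_sig_neq (M : nmodType) (F : V -> M) :
  F v = 0 -> \sum_(x : V') F (val x) = \sum_x F x.
Proof.
move=> Fv; rewrite [RHS](bigD1 v) //= Fv add0r.
rewrite (reindex_omap (val : V' -> V) insub); last by move=> x xv; rewrite insubT.
by apply: eq_bigl => -[x xv] /=; rewrite (insubT (fun y => y != v) xv) xv eqxx.
Qed.

Definition restrict_row (T : Type) (u : 'rV[T]_#|V|) : 'rV[T]_#|V'| :=
  \row_k u 0 (enum_rank (val (enum_val k))).

Lemma restrict_rowE (T : Type) (u : 'rV[T]_#|V|) (x : V') :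
  restrict_row u 0 (enum_rank x) = u 0 (enum_rank (val x)).
Proof. by rewrite mxE enum_rankK. Qed.

Variable u : 'rV[R[i]]_#|V|.
Hypothesis u_v : u 0 (enum_rank v) = 0.

Lemma dotmx_restrict_row : dotmx (restrict_row u) (restrict_row u) = dotmx u u.
Proof.
rewrite !dotmx_vertexE -sum_sig_neq ?u_v ?normr0 ?expr0n //.
by apply: eq_bigr => x _; rewrite restrict_rowE.
Qed.

Lemma adjmx_form_restrict_row :
  dotmx (restrict_row u *m map_mx toC (adjmx R (delete_vertex e v))) (restrict_row u) =
  dotmx (u *m map_mx toC (adjmx R e)) u.
Proof.
rewrite !adjmx_formE -sum_sig_neq; last by rewrite big1 // => y _; rewrite u_v !mul0r.
apply: eq_bigr => x _; rewrite -sum_sig_neq; last by rewrite u_v conjC0 mulr0.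
by apply: eq_bigr => y _; rewrite !restrict_rowE.
Qed.
End DeleteVertex.

Lemma line_graph_gram (R : realType) (V : finType) (e : rel V) :
  is_line_graph e -> exists m (N : 'M[R]_(#|V|, m)), adjmx R e + 2%:M = N *m N^T.
Proof.
move=> [m [h [f [[_ h_irr] [f_inj [f_edge [_ eE]]]]]]].
have f2 x : #|f x| = 2.
  have [a [b [hab ->]]] := f_edge x; rewrite cards2.
  by case: eqVneq hab => [->|//]; rewrite h_irr.
exists m, (\matrix_(i, a) (a \in f (enum_val i))%:R).
apply/matrixP => i j; rewrite !mxE.
transitivity (#|f (enum_val i) :&: f (enum_val j)|%:R : R).
  have [<-|ij] := eqVneq i j; first by rewrite setIid f2 eE eqxx add0r.
  rewrite eE (inj_eq enum_val_inj) ij addr0 card_setI_pair ?f2 //.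
  by rewrite (inj_eq f_inj) (inj_eq enum_val_inj).
rewrite -sum1_card natr_sum big_mkcond /=; apply: eq_bigr => a _.
by rewrite !mxE inE; case: (a \in f _); case: (a \in f _); rewrite ?mulr1 ?mulr0.
Qed.

Lemma line_graph_eigenvalue_ge (R : realType) (V : finType) (e : rel V) (mu : R) :
  is_line_graph e -> is_eigenvalue e mu -> -2 <= mu.
Proof.
move=> /(line_graph_gram R) [m [N AN]]; rewrite /is_eigenvalue -eigenvalue_root_char.
exact: eigenvalue_ge_of_gram AN.
Qed.

Lemma adjmx_spectral_gt_unique (R : realType) (V : finType) (e : rel V) (v : V)
    (b : R) (P : 'M[R[i]]_#|V|) (r : 'rV[R]_#|V|) :
  symmetric e -> (forall x, is_eigenvalue (delete_vertex e v) x -> x <= b) ->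
  P \is unitarymx ->
  map_mx (real_complex R) (adjmx R e) =
    P^t* *m diag_mx (map_mx (real_complex R) r) *m P ->
  forall i j, b < r 0 i -> b < r 0 j -> i = j.
Proof.
move=> e_sym del_le P_unitary AE i j bi bj; case: (eqVneq i j) => // ij; exfalso.
set toC := real_complex R in AE *.
have [bi' bj'] : toC b < map_mx toC r 0 i /\ toC b < map_mx toC r 0 j.
  by rewrite !mxE !ltcR.
have [u [u_v]] := rayleigh_gt_vanishing P_unitary (enum_rank v) ij bi' bj'.
rewrite -AE => u_gt.
have del_sym : symmetric (delete_vertex e v) by move=> x y; apply: e_sym.
have [P' P'_unitary [r' [A'E chi'E]]] := real_symmetric_spectral (adjmx_sym R del_sym).
have r'_le k : map_mx toC r' 0 k <= toC b.
  rewrite mxE lecR; apply: del_le; rewrite /is_eigenvalue chi'E root_prod_XsubC_ord.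
  by apply/existsP; exists k.
have := rayleigh_le P'_unitary r'_le (restrict_row v u).
rewrite -A'E adjmx_form_restrict_row // dotmx_restrict_row //.
by move/(lt_le_trans u_gt); rewrite ltxx.
Qed.

Theorem theorem9 (R : realType) (V : finType) (e : rel V) (v : V) :
  simple_graph e ->
  ~ cyclotomic R e ->
  ~ bipartite e ->
  cyclotomic R (delete_vertex e v) ->
  is_line_graph e ->
  salem_graph R e.
Proof.
move=> e_simple e_noncyc e_nonbip del_cyc e_line; split=> //.
have e_ge (mu : R) : is_eigenvalue e mu -> -2 <= mu := line_graph_eigenvalue_ge e_line.
split; last exact: e_ge.
have [P P_unitary [r [AE chiE]]] := real_symmetric_spectral (adjmx_sym R e_simple.1).
have eigE x : is_eigenvalue e x = [exists k, r 0 k == x].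
  by rewrite /is_eigenvalue chiE root_prod_XsubC_ord.
have r_gt2_uniq : forall i j, 2 < r 0 i -> 2 < r 0 j -> i = j.
  by apply: (adjmx_spectral_gt_unique e_simple.1 _ P_unitary AE) => x /del_cyc /andP[].
have [k r_k | r_le2] := pickP (fun k => 2 < r 0 k); last first.
  case: e_noncyc => x x_eig; rewrite e_ge //=.
  by move: x_eig; rewrite eigE => /existsP [k /eqP <-]; rewrite leNgt r_le2.
exists (r 0 k); split=> //; split; first by rewrite eigE; apply/existsP; exists k.
split.
  rewrite /eig_mult chiE mup_prod_XsubC_ord (@eq_card _ _ (pred1 k)) ?card1 // => l.
  rewrite !inE; apply/eqP/eqP => [r_l|->] //.
  by apply: r_gt2_uniq; rewrite ?r_l.
move=> mu mu_gt2; rewrite eigE => /existsP [l /eqP r_l].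
by rewrite -r_l (r_gt2_uniq l k) ?r_l.
Qed.
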